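(* Let $\gamma$ be an abstract graph and $\gamma'$ a subgraph of $\gamma$ such that every automorphism of $\gamma$ maps $\gamma'$ to itself setwise. Let $\Gamma$ be an embedding of $\gamma$ in $S^3$ and $\Gamma'$ the embedding of $\gamma'$ induced by $\Gamma$. Then ${\mathrm{TSG}}(\Gamma)\leq{\mathrm{TSG}}(\Gamma')$ and ${\mathrm{TSG}}_+(\Gamma)\leq{\mathrm{TSG}}_+(\Gamma')$.
   Context: An embedding of a finite graph $\gamma$ in $S^3$ places the vertices at distinct points and the edges as arcs that meet only at common endpoints; its image $\Gamma$ is a spatial graph. A homeomorphism $h$ of $S^3$ with $h(\Gamma)=\Gamma$ induces an automorphism of $\gamma$. The topological symmetry group ${\mathrm{TSG}}(\Gamma)$ is the subgroup of ${\mathrm{Aut}}(\gamma)$ of automorphisms induced by homeomorphisms of $(S^3,\Gamma)$; ${\mathrm{TSG}}_+(\Gamma)$ is the subgroup induced by orientation-preserving homeomorphisms. In the statement, an automorphism of $\gamma$ induced by a homeomorphism of $(S^3,\Gamma)$ is regarded, via that same homeomorphism (which preserves $\Gamma'$), as an automorphism of $\gamma'$. *)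

From HB Require Import structures.
From mathcomp Require Import all_boot all_order all_algebra.
From mathcomp Require Import all_classical all_reals all_analysis.
Set Implicit Arguments. Unset Strict Implicit. Unset Printing Implicit Defensive.
Import numFieldNormedType.Exports.
Import Order.TTheory GRing.Theory Num.Theory.
Local Open Scope classical_set_scope.
Local Open Scope ring_scope.

Section SpatialGraphs.
Variable R : realType.
Notation pt := 'rV[R]_4.

Definition S3 : set pt := [set x | \sum_(i < 4) (x ord0 i) ^+ 2 = 1].

Definition homeo_S3 (h : pt -> pt) : Prop :=
  (forall x, S3 x -> S3 (h x)) /\ {within S3, continuous h} /\
  exists g : pt -> pt,
    (forall x, S3 x -> S3 (g x)) /\ {within S3, continuous g} /\
    (forall x, S3 x -> g (h x) = x) /\ (forall x, S3 x -> h (g x) = x).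

Definition arcset (a : R -> pt) : set pt := a @` `[0, 1]%classic.

(* a is an arc in S^3 from P to Q: a topological embedding of [0,1]
   (continuous injective from a compact space, hence an embedding). *)
Definition is_arc (a : R -> pt) (P Q : pt) : Prop :=
  {within `[0, 1]%classic, continuous a} /\
  (forall s t, `[0, 1]%classic s -> `[0, 1]%classic t -> a s = a t -> s = t) /\
  arcset a `<=` S3 /\ a 0 = P /\ a 1 = Q.

Variable V : finType.

(* A (sub)graph on V is given by a vertex set W and an edge relation e
   (symmetric, irreflexive, with edges only between vertices of W). *)
Definition is_embedding (W : {set V}) (e : rel V) (p : V -> pt)
    (arc : V -> V -> R -> pt) : Prop :=
  (forall x y, x \in W -> y \in W -> p x = p y -> x = y) /\
  (forall x, x \in W -> S3 (p x)) /\
  (forall x y, e x y ->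
     [/\ x \in W, y \in W, x != y, is_arc (arc x y) (p x) (p y)
       & arcset (arc y x) = arcset (arc x y)]) /\
  (forall x y u v, e x y -> e u v -> [set x; y]%SET != [set u; v]%SET ->
     arcset (arc x y) `&` arcset (arc u v) `<=`
       p @` [set z | z \in ([set x; y] :&: [set u; v])%SET]) /\
  (forall x y z, e x y -> z \in W -> arcset (arc x y) (p z) -> z = x \/ z = y).

Definition spatial (W : {set V}) (e : rel V) (p : V -> pt)
    (arc : V -> V -> R -> pt) : set pt :=
  p @` [set x | x \in W] `|`
  \bigcup_(xy in [set xy : V * V | e xy.1 xy.2]) arcset (arc xy.1 xy.2).

Definition graph_aut (W : {set V}) (e : rel V) (f : V -> V) : Prop :=
  (forall x, x \in W -> f x \in W) /\
  (forall x y, x \in W -> y \in W -> f x = f y -> x = y) /\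
  (forall x y, x \in W -> y \in W -> e (f x) (f y) = e x y).

Definition induces (W : {set V}) (e : rel V) (p : V -> pt)
    (arc : V -> V -> R -> pt) (h : pt -> pt) (f : V -> V) : Prop :=
  h @` spatial W e p arc = spatial W e p arc /\
  (forall x, x \in W -> h (p x) = p (f x)) /\
  (forall x y, e x y -> h @` arcset (arc x y) = arcset (arc (f x) (f y))).

(* Automorphisms induced by homeomorphisms of S^3 in a class Hc.
   Hc = all homeomorphisms gives TSG; Hc = orientation-preserving ones
   gives TSG_+. *)
Definition TSG_in (Hc : (pt -> pt) -> Prop) (W : {set V}) (e : rel V)
    (p : V -> pt) (arc : V -> V -> R -> pt) (f : V -> V) : Prop :=
  graph_aut W e f /\
  exists h, homeo_S3 h /\ Hc h /\ induces W e p arc h f.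

Definition TSG := TSG_in (fun _ => True).

End SpatialGraphs.

From HB Require Import structures.
From mathcomp Require Import all_boot all_order all_algebra.
From mathcomp Require Import all_classical all_reals all_analysis.
Import numFieldNormedType.Exports.

(* An automorphism induced by a homeomorphism h of (S^3, Gamma) is an
   automorphism of gamma, so by hypothesis it preserves gamma' setwise and
   restricts to an automorphism of gamma'.  Since h sends each vertex of
   gamma to the image vertex and each edge arc onto the image edge arc, it
   then sends Gamma' onto itself, so the same h witnesses membership in
   TSG(Gamma') (and in TSG_+(Gamma') when h preserves orientation). *)

Set Implicit Arguments.
Unset Strict Implicit.
Unset Printing Implicit Defensive.

Lemma graph_aut_setT_bij (V : finType) (e : rel V) (f : V -> V) :
  graph_aut [set: V] e f -> bijective f.
Proof.
by case=> _ [finj _]; apply: injF_bij => x y; apply: finj; rewrite inE.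
Qed.

Section SubgraphRestriction.
Variables (R : realType) (V : finType).
Variables (W W' : {set V}) (e e' : rel V) (f : V -> V).
Hypothesis subW : W' \subset W.
Hypothesis f_W' : forall x, (f x \in W') = (x \in W').
Hypothesis f_e' : forall x y, e' (f x) (f y) = e' x y.

Lemma graph_aut_sub : graph_aut W e f -> graph_aut W' e' f.
Proof.
case=> _ [finj _]; split; first by move=> x; rewrite f_W'.
split; last by move=> x y _ _; rewrite f_e'.
by move=> x y /(fintype.subsetP subW) xW /(fintype.subsetP subW) yW;
  apply: finj.
Qed.

Hypothesis sub_e : forall x y, e' x y -> e x y.
Hypothesis f_bij : bijective f.
Variables (p : V -> 'rV[R]_4) (arc : V -> V -> R -> 'rV[R]_4).
Variable h : 'rV[R]_4 -> 'rV[R]_4.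

Section Image.
Hypothesis h_p : forall x, x \in W -> h (p x) = p (f x).
Hypothesis h_arc :
  forall x y, e x y ->
  (h @` arcset (arc x y) = arcset (arc (f x) (f y)))%classic.

Lemma image_spatial_sub :
  (h @` spatial W' e' p arc)%classic = spatial W' e' p arc.
Proof.
have [g fK gK] := f_bij.
have h_p' x : x \in W' -> h (p x) = p (f x) by move/(fintype.subsetP subW)/h_p.
apply/seteqP; split.
- move=> _ [z [[x xW' <-] | [[x y] /= exy' arc_z]] <-].
    by left; exists (f x); rewrite /= ?f_W' // h_p'.
  right; exists (f x, f y); first by rewrite /= f_e'.
  by rewrite /= -h_arc ?sub_e //; exists z.
- move=> z [[x xW' <-] | [[x y] /= exy' arc_z]].
    have gxW' : g x \in W' by rewrite -f_W' gK.
    by exists (p (g x)); [left; exists (g x) | rewrite h_p' // gK].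
  have gexy' : e' (g x) (g y) by rewrite -f_e' !gK.
  move: arc_z; rewrite -[x]gK -[y]gK -h_arc ?sub_e // => -[w arc_w <-].
  by exists w => //; right; exists (g x, g y).
Qed.

End Image.

Lemma induces_sub : induces W e p arc h f -> induces W' e' p arc h f.
Proof.
case=> _ [h_p h_arc]; split; first exact: image_spatial_sub.
split; first by move=> x /(fintype.subsetP subW); apply: h_p.
by move=> x y /sub_e; apply: h_arc.
Qed.

End SubgraphRestriction.

Lemma TSG_in_sub (R : realType) (V : finType)
    (Hc : ('rV[R]_4 -> 'rV[R]_4) -> Prop) (W' : {set V}) (e e' : rel V)
    (p : V -> 'rV[R]_4) (arc : V -> V -> R -> 'rV[R]_4) (f : V -> V) :
  (forall x y, e' x y -> e x y) ->
  (forall x, (f x \in W') = (x \in W')) ->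
  (forall x y, e' (f x) (f y) = e' x y) ->
  TSG_in Hc [set: V] e p arc f -> TSG_in Hc W' e' p arc f.
Proof.
move=> sub_e f_W' f_e' [aut [h [h_homeo [h_Hc h_ind]]]].
have subW : W' \subset [set: V] := finset.subsetT W'.
split; first exact: graph_aut_sub aut.
exists h; split=> //; split=> //.
exact: (induces_sub subW f_W' f_e' sub_e (graph_aut_setT_bij aut) h_ind).
Qed.

Theorem mainTheorem3 (R : realType) (V : finType) (adj : rel V)
  (adj_sym : symmetric adj) (adj_irr : irreflexive adj)
  (V' : {set V}) (adj' : rel V)
  (adj'_sym : symmetric adj')
  (sub_edges : forall x y, adj' x y -> [/\ adj x y, x \in V' & y \in V'])
  (aut_pres : forall s : V -> V, graph_aut [set: V] adj s ->
     (forall x, (s x \in V') = (x \in V')) /\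
     (forall x y, adj' (s x) (s y) = adj' x y))
  (p : V -> 'rV[R]_4) (arc : V -> V -> R -> 'rV[R]_4)
  (emb : is_embedding [set: V] adj p arc) :
  (forall f : V -> V, TSG [set: V] adj p arc f -> TSG V' adj' p arc f) /\
  (forall (Hc : ('rV[R]_4 -> 'rV[R]_4) -> Prop) (f : V -> V),
     TSG_in Hc [set: V] adj p arc f -> TSG_in Hc V' adj' p arc f).
Proof.
have sub_adj x y : adj' x y -> adj x y by case/sub_edges.
have TSG_in_restrict Hc f :
    TSG_in Hc [set: V] adj p arc f -> TSG_in Hc V' adj' p arc f.
  move=> tsg; have [f_V' f_adj'] := aut_pres f tsg.1.
  exact: TSG_in_sub tsg.
by split=> [f|]; apply: TSG_in_restrict.
Qed.
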